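(* Let $(\mathcal{X},d)$ be a Polish space and let $c:\mathcal{X}\times\mathcal{X}\to\mathbb{R}^+$ be of the form $c(x,y)=\phi(d(x,y))$, where $\phi:\mathbb{R}^+\to\mathbb{R}^+$ is convex, $\phi(0)=0$, $\phi(x)>0$ for $x>0$, and $\sup_{x>0}\phi(2x)/\phi(x)<\infty$. Define $p_o=\sup_{x>0}x\phi'(x)/\phi(x)$, where $\phi'$ is the right derivative of $\phi$. Then $1\le p_o<\infty$, and $\tilde d(x,y)=c^{1/p_o}(x,y)$ is a distance on $\mathcal{X}$ inducing the same topology as $d$. *)

From Stdlib Require Import Reals Lra.
From Coquelicot Require Import Coquelicot.
Open Scope R_scope.

Definition is_metric {X : Type} (d : X -> X -> R) : Prop :=
  (forall x y, 0 <= d x y) /\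
  (forall x y, d x y = 0 <-> x = y) /\
  (forall x y, d x y = d y x) /\
  (forall x y z, d x z <= d x y + d y z).

Definition d_cauchy {X : Type} (d : X -> X -> R) (u : nat -> X) : Prop :=
  forall eps, 0 < eps -> exists N, forall m n, (N <= m)%nat -> (N <= n)%nat ->
    d (u m) (u n) < eps.

Definition d_converges {X : Type} (d : X -> X -> R) (u : nat -> X) (l : X) : Prop :=
  forall eps, 0 < eps -> exists N, forall n, (N <= n)%nat -> d (u n) l < eps.

Definition d_complete {X : Type} (d : X -> X -> R) : Prop :=
  forall u, d_cauchy d u -> exists l, d_converges d u l.

Definition d_separable {X : Type} (d : X -> X -> R) : Prop :=
  exists u : nat -> X, forall x eps, 0 < eps -> exists n, d x (u n) < eps.

Definition polish_metric {X : Type} (d : X -> X -> R) : Prop :=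
  is_metric d /\ d_complete d /\ d_separable d.

Definition d_open {X : Type} (d : X -> X -> R) (U : X -> Prop) : Prop :=
  forall x, U x -> exists eps, 0 < eps /\ forall y, d x y < eps -> U y.

Definition same_topology {X : Type} (d1 d2 : X -> X -> R) : Prop :=
  forall U : X -> Prop, d_open d1 U <-> d_open d2 U.

Definition convex_on_nonneg (phi : R -> R) : Prop :=
  forall x y t, 0 <= x -> 0 <= y -> 0 <= t <= 1 ->
    phi (t * x + (1 - t) * y) <= t * phi x + (1 - t) * phi y.

Definition is_right_deriv (phi : R -> R) (x D : R) : Prop :=
  filterlim (fun h => (phi (x + h) - phi x) / h) (at_right 0) (locally D).

Definition po_set (phi : R -> R) (r : R) : Prop :=
  exists x D, 0 < x /\ is_right_deriv phi x D /\ r = x * D / phi x.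

(** a^b for a >= 0, with the convention 0^b = 0 (b > 0). *)
Definition rpow (a b : R) : R := if Rlt_dec 0 a then Rpower a b else 0.

From Stdlib Require Import Reals Lra Classical.
From Coquelicot Require Import Coquelicot.
Open Scope R_scope.

(* Convexity makes the difference quotients of phi monotone, so phi has a right
   derivative D(x) with phi(x)/x <= D(x) <= (phi(2x) - phi(x))/x; the doubling bound then
   puts x D(x)/phi(x) in [1, K - 1], so p_o exists and p_o >= 1.  Bounding the chord
   slope on [x, y] by D(y) <= p_o phi(y)/y gives ln phi(y) - ln phi(x) <= q (ln y - ln x)
   for every q > p_o when x <= y are close; chaining such steps and letting q decrease to
   p_o shows that phi(t)/t^p_o is nonincreasing.  Hence psi = phi^(1/p_o) has psi(t)/t
   nonincreasing, which makes psi subadditive; psi is also increasing, vanishes only at 0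
   and is continuous there, so psi o d is a metric with the same open sets as d. *)

Definition slope (f : R -> R) (a b : R) : R := (f b - f a) / (b - a).

Lemma slope_shift (f : R -> R) x h : slope f x (x + h) = (f (x + h) - f x) / h.
Proof. unfold slope. replace (x + h - x) with h by ring. reflexivity. Qed.

Lemma ln_le_sub_1 x : 0 < x -> ln x <= x - 1.
Proof. intros Hx. pose proof (exp_ineq1_le (ln x)) as H. rewrite exp_ln in H; lra. Qed.

Lemma exp_le_compat a b : a <= b -> exp a <= exp b.
Proof.
  intros [Hlt | ->]; [left; apply exp_increasing; exact Hlt | right; reflexivity].
Qed.

Lemma div_le_div_cross p q r s : 0 < q -> 0 < s -> p * s <= r * q -> p / q <= r / s.
Proof.
  intros Hq Hs H. apply Rle_div_l; [exact Hq |].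
  replace (r / s * q) with (r * q / s) by (field; lra).
  apply Rle_div_r; [exact Hs | exact H].
Qed.

Lemma le_mult_of_forall_gt (A L p : R) :
  0 <= L -> (forall q, p < q -> A <= q * L) -> A <= p * L.
Proof.
  intros HL HA.
  destruct (Rle_or_lt A (p * L)) as [H | H]; [exact H | exfalso].
  destruct (Req_dec L 0) as [HL0 | HL0].
  - specialize (HA (p + 1) ltac:(lra)). rewrite HL0 in *. lra.
  - specialize (HA (p + (A - p * L) / (2 * L))).
    assert (0 < (A - p * L) / (2 * L)) by (apply Rdiv_lt_0_compat; lra).
    assert ((p + (A - p * L) / (2 * L)) * L = p * L + (A - p * L) / 2) by (field; lra).
    specialize (HA ltac:(lra)). lra.
Qed.

Lemma at_right_0_interval c : 0 < c -> at_right 0 (fun h => 0 < h < c).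
Proof.
  intros Hc. exists (mkposreal c Hc). intros h Hh Hpos.
  change (Rabs (h - 0) < c) in Hh. apply Rabs_lt_between in Hh. lra.
Qed.

Lemma right_limit_of_nondecreasing (f : R -> R) (m : R) :
  (forall h1 h2, 0 < h1 -> h1 <= h2 -> f h1 <= f h2) ->
  (forall h, 0 < h -> m <= f h) ->
  exists L, filterlim f (at_right 0) (locally L).
Proof.
  intros Hmono Hm.
  set (E := fun r => exists h, 0 < h /\ r = - f h).
  destruct (completeness E) as [L' [HL'ub HL'lub]].
  { exists (- m). intros r [h [Hh ->]]. specialize (Hm h Hh). lra. }
  { exists (- f 1), 1. split; [lra | reflexivity]. }
  exists (- L'). apply filterlim_locally. intros eps.
  assert (Hinf : forall h, 0 < h -> - L' <= f h).
  { intros h Hh. assert (E (- f h)) as HE by (exists h; split; [exact Hh | reflexivity]).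
    specialize (HL'ub _ HE). lra. }
  assert (Happrox : exists h0, 0 < h0 /\ f h0 < - L' + eps).
  { apply NNPP. intros Hno.
    assert (is_upper_bound E (L' - eps)) as Hub.
    { intros r [h [Hh ->]]. destruct (Rlt_or_le (f h) (- L' + eps)) as [Hlt | Hge].
      - exfalso. apply Hno. exists h. split; assumption.
      - lra. }
    specialize (HL'lub _ Hub). destruct eps as [eps Heps]. simpl in *. lra. }
  destruct Happrox as [h0 [Hh0 Hfh0]].
  apply filter_imp with (fun h => 0 < h < h0); [| exact (at_right_0_interval h0 Hh0)].
  intros h [Hh Hhh0]. change (Rabs (f h - - L') < eps). apply Rabs_lt_between.
  pose proof (Hinf h Hh). pose proof (Hmono h h0 Hh (Rlt_le _ _ Hhh0)).
  destruct eps as [eps Heps]. simpl in *. lra.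
Qed.

Definition small_near_0 (f : R -> R) : Prop :=
  forall E, 0 < E -> exists del, 0 < del /\ forall t, 0 <= t -> t < del -> f t < E.

Lemma small_near_0_comp (f g : R -> R) : (forall t, 0 <= t -> 0 <= f t) ->
  small_near_0 f -> small_near_0 g -> small_near_0 (fun t => g (f t)).
Proof.
  intros Hf_nonneg Hf Hg E HE.
  destruct (Hg E HE) as [eta [Heta Hgeta]].
  destruct (Hf eta Heta) as [del [Hdel Hfdel]].
  exists del. split; [exact Hdel |].
  intros t Ht Htdel. apply Hgeta; [apply Hf_nonneg; exact Ht | apply Hfdel; assumption].
Qed.

Lemma subadditive_of_ratio_nonincreasing (psi : R -> R) :
  (forall x y, 0 < x -> x <= y -> psi y * x <= psi x * y) ->
  forall a b, 0 < a -> 0 < b -> psi (a + b) <= psi a + psi b.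
Proof.
  intros Hratio a b Ha Hb.
  pose proof (Hratio a (a + b) Ha ltac:(lra)) as Hra.
  pose proof (Hratio b (a + b) Hb ltac:(lra)) as Hrb.
  apply Rmult_le_reg_r with (a + b); [lra |]. nra.
Qed.

Section MetricComposition.

Variables (X : Type) (d : X -> X -> R) (psi : R -> R).
Hypothesis d_nonneg : forall x y, 0 <= d x y.
Hypothesis psi_0 : psi 0 = 0.
Hypothesis psi_increasing : forall a b, 0 <= a -> a < b -> psi a < psi b.

Lemma psi_le_compat a b : 0 <= a -> a <= b -> psi a <= psi b.
Proof. intros Ha [Hab | <-]; [left; apply psi_increasing; assumption | lra]. Qed.

Lemma is_metric_comp :
  is_metric d -> (forall a b, 0 < a -> 0 < b -> psi (a + b) <= psi a + psi b) ->
  is_metric (fun x y => psi (d x y)).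
Proof.
  intros [_ [Hsep [Hsym Htri]]] Hsub.
  assert (Hdxx : forall x, psi (d x x) = 0)
    by (intros x; rewrite (proj2 (Hsep x x) eq_refl); exact psi_0).
  split; [| split; [| split]].
  - intros x y. rewrite <- psi_0. apply psi_le_compat; [lra | apply d_nonneg].
  - intros x y. split; [| intros ->; apply Hdxx].
    intros H. apply Hsep. destruct (d_nonneg x y) as [Hpos | Hz]; [| lra].
    pose proof (psi_increasing 0 (d x y) ltac:(lra) Hpos). lra.
  - intros x y. rewrite Hsym. reflexivity.
  - intros x y z.
    destruct (d_nonneg x y) as [Hxy | Hxy];
      [| apply eq_sym, Hsep in Hxy; subst y; rewrite Hdxx; lra].
    destruct (d_nonneg y z) as [Hyz | Hyz];
      [| apply eq_sym, Hsep in Hyz; subst z; rewrite Hdxx; lra].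
    apply Rle_trans with (psi (d x y + d y z)).
    + apply psi_le_compat; [apply d_nonneg | apply Htri].
    + apply Hsub; assumption.
Qed.

Lemma same_topology_comp : small_near_0 psi -> same_topology d (fun x y => psi (d x y)).
Proof.
  intros Hsmall U. split.
  - intros HU x Hx. destruct (HU x Hx) as [eps [Heps HUeps]].
    exists (psi eps). split; [rewrite <- psi_0; apply psi_increasing; lra |].
    intros y Hy. apply HUeps. destruct (Rlt_or_le (d x y) eps) as [H | H]; [exact H |].
    pose proof (psi_le_compat eps (d x y) ltac:(lra) H). lra.
  - intros HU x Hx. destruct (HU x Hx) as [eps [Heps HUeps]].
    destruct (Hsmall eps Heps) as [del [Hdel Hpsi]].
    exists del. split; [exact Hdel |].
    intros y Hy. apply HUeps, Hpsi; [apply d_nonneg | exact Hy].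
Qed.

End MetricComposition.

Lemma rpow_0_l b : rpow 0 b = 0.
Proof. unfold rpow. destruct (Rlt_dec 0 0); [lra | reflexivity]. Qed.

Lemma rpow_pos_l a b : 0 < a -> rpow a b = Rpower a b.
Proof. intros Ha. unfold rpow. destruct (Rlt_dec 0 a); [reflexivity | lra]. Qed.

Lemma rpow_lt_compat b a1 a2 : 0 < b -> 0 <= a1 -> a1 < a2 -> rpow a1 b < rpow a2 b.
Proof.
  intros Hb Ha1 Ha12. rewrite (rpow_pos_l a2) by lra.
  destruct Ha1 as [Ha1 | <-].
  - rewrite rpow_pos_l by lra. apply Rlt_Rpower_l; lra.
  - rewrite rpow_0_l. apply exp_pos.
Qed.

Lemma rpow_small_near_0 b : 0 < b -> small_near_0 (fun a => rpow a b).
Proof.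
  intros Hb E HE. exists (Rpower E (/ b)). split; [apply exp_pos |].
  intros a [Ha | <-] HaE; [| rewrite rpow_0_l; exact HE].
  rewrite rpow_pos_l by lra.
  replace E with (Rpower (Rpower E (/ b)) b)
    by (rewrite Rpower_mult, Rinv_l, Rpower_1 by lra; reflexivity).
  apply Rlt_Rpower_l; lra.
Qed.

Section ConvexOnNonneg.

Variable phi : R -> R.
Hypothesis phi_convex : convex_on_nonneg phi.

Lemma convex_chord a b c : 0 <= a -> a < b -> b < c ->
  phi b * (c - a) <= (c - b) * phi a + (b - a) * phi c.
Proof.
  intros Ha Hab Hbc.
  set (t := (c - b) / (c - a)).
  assert (Ht : 0 <= t <= 1).
  { unfold t. split.
    - apply Rdiv_le_0_compat; lra.
    - apply Rle_div_l; lra. }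
  pose proof (phi_convex a c t Ha ltac:(lra) Ht) as H.
  replace (t * a + (1 - t) * c) with b in H by (unfold t; field; lra).
  apply Rmult_le_compat_r with (r := c - a) in H; [| lra].
  replace ((t * phi a + (1 - t) * phi c) * (c - a))
    with ((c - b) * phi a + (b - a) * phi c) in H by (unfold t; field; lra).
  exact H.
Qed.

Lemma slope_le_extend a b c : 0 <= a -> a < b -> b <= c -> slope phi a b <= slope phi a c.
Proof.
  intros Ha Hab [Hbc | <-]; [| lra].
  pose proof (convex_chord a b c Ha Hab Hbc).
  unfold slope. apply div_le_div_cross; nra.
Qed.

Lemma slope_le_adjacent a b c : 0 <= a -> a < b -> b < c -> slope phi a b <= slope phi b c.
Proof.
  intros Ha Hab Hbc.
  pose proof (convex_chord a b c Ha Hab Hbc).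
  unfold slope. apply div_le_div_cross; nra.
Qed.

Lemma right_deriv_exists x : 0 < x -> exists D, is_right_deriv phi x D.
Proof.
  intros Hx.
  destruct (right_limit_of_nondecreasing (fun h => slope phi x (x + h)) (slope phi 0 x))
    as [D HD].
  - intros h1 h2 Hh1 Hh12. apply slope_le_extend; lra.
  - intros h Hh. apply slope_le_adjacent; lra.
  - exists D. unfold is_right_deriv.
    apply filterlim_ext with (fun h => slope phi x (x + h)); [| exact HD].
    intros h. apply slope_shift.
Qed.

Lemma slope_le_right_deriv a x D : 0 <= a -> a < x -> is_right_deriv phi x D ->
  slope phi a x <= D.
Proof.
  intros Ha Hax HD.
  apply (closed_filterlim_loc _ (fun u => slope phi a x <= u) _ HD); [| apply closed_ge].
  apply filter_imp with (fun h => 0 < h < 1); [| apply at_right_0_interval; lra].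
  intros h [Hh _]. rewrite <- slope_shift. apply slope_le_adjacent; lra.
Qed.

Lemma right_deriv_le_slope x h D : 0 < x -> 0 < h -> is_right_deriv phi x D ->
  D <= slope phi x (x + h).
Proof.
  intros Hx Hh HD.
  apply (closed_filterlim_loc _ (fun u => u <= slope phi x (x + h)) _ HD); [| apply closed_le].
  apply filter_imp with (fun h' => 0 < h' < h); [| apply at_right_0_interval; lra].
  intros h' Hh'. rewrite <- slope_shift. apply slope_le_extend; lra.
Qed.

Section VanishingOnlyAtZero.

Hypothesis phi_0 : phi 0 = 0.
Hypothesis phi_pos : forall x, 0 < x -> 0 < phi x.

Lemma phi_increasing a b : 0 <= a -> a < b -> phi a < phi b.
Proof.
  intros Ha Hab. pose proof (phi_pos b ltac:(lra)) as Hb.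
  destruct (Req_dec a 0) as [-> | Ha0]; [rewrite phi_0; exact Hb |].
  pose proof (convex_chord 0 a b ltac:(lra) ltac:(lra) Hab) as H.
  rewrite phi_0 in H. nra.
Qed.

Lemma po_set_ge_1 r : po_set phi r -> 1 <= r.
Proof.
  intros [x [D [Hx [HD ->]]]].
  pose proof (slope_le_right_deriv 0 x D ltac:(lra) Hx HD) as H.
  unfold slope in H. rewrite phi_0 in H.
  apply Rle_div_r; [apply phi_pos; exact Hx |].
  apply Rle_div_l in H; lra.
Qed.

Lemma po_set_le_doubling K r :
  (forall x, 0 < x -> phi (2 * x) / phi x <= K) -> po_set phi r -> r <= K - 1.
Proof.
  intros HK [x [D [Hx [HD ->]]]].
  pose proof (phi_pos x Hx) as Hphix.
  pose proof (right_deriv_le_slope x x D Hx Hx HD) as H.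
  rewrite slope_shift in H. replace (x + x) with (2 * x) in H by ring.
  specialize (HK x Hx). apply Rle_div_l in HK; [| lra].
  apply Rle_div_r in H; [| lra].
  apply Rle_div_l; [lra |]. lra.
Qed.

Lemma po_set_nonempty : exists r, po_set phi r.
Proof.
  destruct (right_deriv_exists 1 Rlt_0_1) as [D HD].
  exists (1 * D / phi 1), 1, D. split; [lra | split; [exact HD | reflexivity]].
Qed.

Lemma phi_small_near_0 : small_near_0 phi.
Proof.
  intros E HE. pose proof (phi_pos 1 Rlt_0_1) as H1.
  exists (Rmin 1 (E / (phi 1 + 1))). split.
  { apply Rmin_pos; [lra | apply Rdiv_lt_0_compat; lra]. }
  intros t Ht Htdel.
  pose proof (Rlt_le_trans _ _ _ Htdel (Rmin_l _ _)) as Ht1.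
  pose proof (Rlt_le_trans _ _ _ Htdel (Rmin_r _ _)) as HtE.
  apply Rlt_div_r in HtE; [| lra].
  pose proof (phi_convex 1 0 t ltac:(lra) ltac:(lra) ltac:(lra)) as H.
  replace (t * 1 + (1 - t) * 0) with t in H by ring. rewrite phi_0 in H. nra.
Qed.

Variable po : R.
Hypothesis po_pos : 0 < po.
Hypothesis po_ub : is_upper_bound (po_set phi) po.

Lemma right_deriv_le_po y D : 0 < y -> is_right_deriv phi y D -> y * D <= po * phi y.
Proof.
  intros Hy HD. pose proof (phi_pos y Hy) as Hphiy.
  assert (Hr : po_set phi (y * D / phi y)) by (exists y, D; auto).
  specialize (po_ub _ Hr). apply Rle_div_l in po_ub; lra.
Qed.

Lemma phi_sub_le x y : 0 <= x -> x <= y -> 0 < y ->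
  (phi y - phi x) * y <= po * phi y * (y - x).
Proof.
  intros Hx [Hxy | <-] Hy; [| rewrite !Rminus_diag; lra].
  destruct (right_deriv_exists y Hy) as [D HD].
  pose proof (slope_le_right_deriv x y D Hx Hxy HD) as Hs.
  pose proof (right_deriv_le_po y D Hy HD) as Hp.
  unfold slope in Hs. apply Rle_div_l in Hs; [| lra]. nra.
Qed.

Lemma ln_phi_growth_local q x y : po < q -> 0 < x -> x <= y ->
  (y - x) * q * po <= (q - po) * y ->
  ln (phi y) - ln (phi x) <= q * (ln y - ln x).
Proof.
  intros Hq Hx Hxy Hstep.
  pose proof (phi_pos x Hx) as Hphix. pose proof (phi_pos y ltac:(lra)) as Hphiy.
  set (v := (y - x) / y).
  assert (Hv : 0 <= v) by (apply Rdiv_le_0_compat; lra).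
  assert (Hvq : v * q * po <= q - po).
  { unfold v. replace ((y - x) / y * q * po) with ((y - x) * q * po / y) by (field; lra).
    apply Rle_div_l; lra. }
  assert (Hbound : phi y <= phi x * (1 + q * v)).
  { pose proof (phi_sub_le x y ltac:(lra) Hxy ltac:(lra)) as H.
    assert (Hx' : phi y * (1 - po * v) <= phi x).
    { unfold v. apply Rle_div_r in H; [| lra].
      replace (phi y * (1 - po * ((y - x) / y))) with (phi y - po * phi y * (y - x) / y)
        by (field; lra). lra. }
    (* The step-size hypothesis is exactly what makes this product at least 1. *)
    assert (Hprod : 1 <= (1 + q * v) * (1 - po * v)) by nra.
    assert (Hqv : 0 < 1 + q * v) by nra.
    apply Rle_trans with (phi y * ((1 + q * v) * (1 - po * v))); [nra |].
    replace (phi y * ((1 + q * v) * (1 - po * v))) with ((phi y * (1 - po * v)) * (1 + q * v))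
      by ring.
    apply Rmult_le_compat_r; lra. }
  assert (Hln_phi : ln (phi y) <= ln (phi x) + q * v).
  { pose proof (ln_le _ _ Hphiy Hbound) as H.
    rewrite ln_mult in H by nra.
    pose proof (ln_le_sub_1 (1 + q * v) ltac:(nra)). lra. }
  assert (Hln_xy : v <= ln y - ln x).
  { pose proof (ln_le_sub_1 (x / y) ltac:(apply Rdiv_lt_0_compat; lra)) as H.
    rewrite ln_div in H by lra.
    replace (x / y - 1) with (- v) in H by (unfold v; field; lra). lra. }
  nra.
Qed.

Lemma ln_phi_growth q x y : po < q -> 0 < x -> x <= y ->
  ln (phi y) - ln (phi x) <= q * (ln y - ln x).
Proof.
  intros Hq Hx Hxy.
  (* Steps of this length satisfy the hypothesis of [ln_phi_growth_local] on all of
     [x, +oo). *)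
  set (del := (q - po) * x / (q * po)).
  assert (Hdel : 0 < del) by (apply Rdiv_lt_0_compat; nra).
  assert (Hsteps : forall n, forall z, x <= z -> z <= x + INR n * del ->
    ln (phi z) - ln (phi x) <= q * (ln z - ln x)).
  { induction n as [| n IH]; intros z Hxz Hz.
    - simpl in Hz. replace z with x by lra. lra.
    - destruct (Rle_or_lt z (x + INR n * del)) as [Hle | Hgt]; [exact (IH z Hxz Hle) |].
      rewrite S_INR, Rmult_plus_distr_r, Rmult_1_l in Hz.
      set (z' := Rmax x (z - del)).
      assert (Hz' : x <= z' <= z) by (split; [apply Rmax_l | apply Rmax_lub; lra]).
      assert (Hzz' : z - z' <= del) by (unfold z'; pose proof (Rmax_r x (z - del)); lra).
      assert (Hn : 0 <= INR n * del) by (apply Rmult_le_pos; [apply pos_INR | lra]).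
      pose proof (IH z' (proj1 Hz') ltac:(apply Rmax_lub; lra)) as Hprev.
      assert (Hlocal : ln (phi z) - ln (phi z') <= q * (ln z - ln z')).
      { apply ln_phi_growth_local; [exact Hq | lra | lra |].
        assert (Hdel_eq : del * q * po = (q - po) * x) by (unfold del; field; lra).
        assert (0 < q * po) by nra.
        nra. }
      lra. }
  destruct (INR_archimed del (y - x) Hdel) as [n Hn].
  apply (Hsteps n); lra.
Qed.

Lemma ln_phi_growth_po x y : 0 < x -> x <= y ->
  ln (phi y) - ln (phi x) <= po * (ln y - ln x).
Proof.
  intros Hx Hxy. apply le_mult_of_forall_gt.
  - destruct Hxy as [Hlt | <-]; [pose proof (ln_increasing x y Hx Hlt); lra | lra].
  - intros q Hq. exact (ln_phi_growth q x y Hq Hx Hxy).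
Qed.

Lemma rpow_phi_ratio x y : 0 < x -> x <= y ->
  rpow (phi y) (1 / po) * x <= rpow (phi x) (1 / po) * y.
Proof.
  intros Hx Hxy.
  assert (Hexp : forall t s, 0 < t -> 0 < s ->
    rpow (phi t) (1 / po) * s = exp (1 / po * ln (phi t) + ln s)).
  { intros t s Ht Hs. rewrite rpow_pos_l by (apply phi_pos; exact Ht).
    unfold Rpower. rewrite exp_plus, exp_ln by exact Hs. reflexivity. }
  rewrite !Hexp by lra. apply exp_le_compat.
  pose proof (ln_phi_growth_po x y Hx Hxy) as H.
  apply Rmult_le_reg_l with po; [exact po_pos |].
  replace (po * (1 / po * ln (phi y) + ln x)) with (ln (phi y) + po * ln x) by (field; lra).
  replace (po * (1 / po * ln (phi x) + ln y)) with (ln (phi x) + po * ln y) by (field; lra).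
  lra.
Qed.

End VanishingOnlyAtZero.

End ConvexOnNonneg.

Theorem lemma2p1 (X : Type) (d : X -> X -> R) (phi : R -> R)
  (Hd : polish_metric d)
  (Hphi_nonneg : forall x, 0 <= x -> 0 <= phi x)
  (Hconv : convex_on_nonneg phi)
  (Hphi0 : phi 0 = 0)
  (Hpos : forall x, 0 < x -> 0 < phi x)
  (Hdoubling : exists K, forall x, 0 < x -> phi (2 * x) / phi x <= K) :
  (forall x, 0 < x -> exists D, is_right_deriv phi x D) /\
  exists po : R,
    is_lub (po_set phi) po /\ 1 <= po /\
    is_metric (fun x y => rpow (phi (d x y)) (1 / po)) /\
    same_topology d (fun x y => rpow (phi (d x y)) (1 / po)).
Proof.
  destruct Hd as [Hmetric _].
  destruct Hdoubling as [K HK].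
  split; [exact (right_deriv_exists phi Hconv) |].
  destruct (completeness (po_set phi)) as [po Hpo].
  - exists (K - 1). intros r. exact (po_set_le_doubling phi Hconv Hpos K r HK).
  - exact (po_set_nonempty phi Hconv).
  assert (Hpo1 : 1 <= po).
  { destruct (po_set_nonempty phi Hconv) as [r Hr].
    pose proof (po_set_ge_1 phi Hconv Hphi0 Hpos r Hr). pose proof (proj1 Hpo r Hr). lra. }
  exists po. split; [exact Hpo |]. split; [exact Hpo1 |].
  assert (Hpo_pos : 0 < po) by lra.
  set (psi := fun t => rpow (phi t) (1 / po)).
  assert (Hpsi0 : psi 0 = 0) by (unfold psi; rewrite Hphi0; apply rpow_0_l).
  assert (Hpsi_incr : forall a b, 0 <= a -> a < b -> psi a < psi b).
  { intros a b Ha Hab. apply rpow_lt_compat.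
    - apply Rdiv_lt_0_compat; lra.
    - exact (Hphi_nonneg a Ha).
    - exact (phi_increasing phi Hconv Hphi0 Hpos a b Ha Hab). }
  pose proof (proj1 Hmetric) as Hd_nonneg.
  split.
  - apply (is_metric_comp X d psi Hd_nonneg Hpsi0 Hpsi_incr Hmetric).
    apply subadditive_of_ratio_nonincreasing.
    exact (rpow_phi_ratio phi Hconv Hpos po Hpo_pos (proj1 Hpo)).
  - apply (same_topology_comp X d psi Hd_nonneg Hpsi0 Hpsi_incr).
    apply (small_near_0_comp phi (fun a => rpow a (1 / po)) Hphi_nonneg).
    + exact (phi_small_near_0 phi Hconv Hphi0 Hpos).
    + apply rpow_small_near_0, Rdiv_lt_0_compat; lra.
Qed.
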